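(* Let $D$ be a Dirac operator for a finite complex spectral triple $(\mathcal A,\mathcal H,\pi,J,\gamma)$ and let $\Omega^1_D:=\mathrm{span}\{\pi(a)[D,\pi(b)]:a,b\in\mathcal A\}\subseteq B(\mathcal H)$. If $\omega\in\Omega^1_D$ satisfies $\pi(a)\omega=\omega\pi(a)$ for all $a\in\mathcal A$, then $\omega=0$.
   Context: Let $\mathcal A=\bigoplus_{i=1}^k M_{n_i}(\mathbb C)$ ($n_i\ge 1$), with involution $a\mapsto a^*$ given by blockwise conjugate transpose. A finite complex spectral triple over $\mathcal A$ consists of: a finite-dimensional complex Hilbert space $\mathcal H$; a faithful $*$-representation $\pi:\mathcal A\to B(\mathcal H)$; an antilinear isometry $J$ of $\mathcal H$ with $J^2=1$ such that $\pi^0(a):=J\pi(a)^*J$ defines a representation of the opposite algebra $\mathcal A^0$ and $[\pi^0(a),\pi(b)]=0$ for all $a,b\in\mathcal A$; and a grading $\gamma\in B(\mathcal H)$ with $\gamma^*=\gamma$, $\gamma^2=1$, $J\gamma=\gamma J$, $\gamma\pi(a)=\pi(a)\gamma$ for all $a$, and $\gamma=\sum_m\pi(x_m)\pi^0(y_m)$ for finitely many $x_m,y_m\in\mathcal A$. A Dirac operator is a self-adjoint $D\in B(\mathcal H)$ with $DJ=JD$, $D\gamma=-\gamma D$ and $[[D,\pi(a)],\pi^0(b)]=0$ for all $a,b\in\mathcal A$. The space $\Omega^1_D$ is (isomorphic to) the first-order differential calculus $\Omega^1(\mathcal A)$ of the spectral triple, an $\mathcal A$-bimodule via left and right multiplication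 by $\pi(\mathcal A)$. *)

From mathcomp Require Import all_boot all_algebra.
From mathcomp Require Import reals complex.
Set Implicit Arguments. Unset Strict Implicit. Unset Printing Implicit Defensive.
Import GRing.Theory Num.Theory.
Local Open Scope ring_scope.

Definition adjmx (R : realType) (m p : nat) (M : 'M[R[i]]_(m, p)) : 'M[R[i]]_(p, m) :=
  (map_mx Num.conj M)^T.

(* The algebra  A = (+)_{i<k} M_{n_i}(C): elements are families of matrices,
   operations are blockwise. *)
Definition algA (R : realType) (k : nat) (n : 'I_k -> nat) : Type :=
  forall i : 'I_k, 'M[R[i]]_(n i).
Arguments algA R {k} n.

Definition addA (R : realType) (k : nat) (n : 'I_k -> nat) (a b : algA R n) : algA R n := fun i => a i + b i.
Definition mulA (R : realType) (k : nat) (n : 'I_k -> nat) (a b : algA R n) : algA R n := fun i => a i *m b i.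
Definition scaleA (R : realType) (k : nat) (n : 'I_k -> nat) (c : R[i]) (a : algA R n) : algA R n := fun i => c *: a i.
Definition starA (R : realType) (k : nat) (n : 'I_k -> nat) (a : algA R n) : algA R n := fun i => adjmx (a i).

(* The Hilbert space  H = C^N  (column vectors); B(H) = 'M_N acting on the left.
   J is an arbitrary (set-theoretic) map  C^N -> C^N.  For an operator T,
   conjJ J T  is the map  v |-> J (T (J v)).  *)
Definition conjJ (R : realType) N (J : 'cV[R[i]]_N -> 'cV[R[i]]_N) (T : 'M[R[i]]_N)
  : 'cV[R[i]]_N -> 'cV[R[i]]_N := fun v => J (T *m J v).

(* pi^0(a) := J pi(a)^* J, as a map on H *)
Definition piop (R : realType) (k : nat) (n : 'I_k -> nat) N (pi : algA R n -> 'M[R[i]]_N)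
  (J : 'cV[R[i]]_N -> 'cV[R[i]]_N) (a : algA R n) : 'cV[R[i]]_N -> 'cV[R[i]]_N :=
  conjJ J (adjmx (pi a)).

Definition is_faithful_star_rep (R : realType) (k : nat) (n : 'I_k -> nat) N (pi : algA R n -> 'M[R[i]]_N) : Prop :=
  [/\ forall a b, pi (addA a b) = pi a + pi b,
      forall c a, pi (scaleA c a) = c *: pi a,
      forall a b, pi (mulA a b) = pi a *m pi b,
      forall a, pi (starA a) = adjmx (pi a)
    & injective pi].

Definition is_real_structure (R : realType) N (J : 'cV[R[i]]_N -> 'cV[R[i]]_N) : Prop :=
  [/\ forall x y, J (x + y) = J x + J y,
      forall (c : R[i]) x, J (c *: x) = c^* *: J x,
      forall x, adjmx (J x) *m J x = adjmx x *m x
    & forall x, J (J x) = x].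

Definition is_finite_spectral_triple (R : realType) (k : nat) (n : 'I_k -> nat) N (pi : algA R n -> 'M[R[i]]_N)
  (J : 'cV[R[i]]_N -> 'cV[R[i]]_N) (gamma : 'M[R[i]]_N) : Prop :=
  [/\ is_faithful_star_rep pi,
      is_real_structure J,
      (* pi^0 is a representation of the opposite algebra A^0 *)
      [/\ forall a b v, piop pi J (addA a b) v = piop pi J a v + piop pi J b v,
          forall c a v, piop pi J (scaleA c a) v = c *: piop pi J a v
        & forall a b v, piop pi J (mulA a b) v = piop pi J b (piop pi J a v)],
      (* order zero condition [pi^0(a), pi(b)] = 0 *)
      forall a b v, piop pi J a (pi b *m v) = pi b *m piop pi J a v &
      [/\ adjmx gamma = gamma, gamma *m gamma = 1%:M,
          forall v, J (gamma *m v) = gamma *m J v,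
          forall a, gamma *m pi a = pi a *m gamma
        & exists (m : nat) (x y : 'I_m -> algA R n),
            forall v, gamma *m v = \sum_(j < m) pi (x j) *m piop pi J (y j) v]].

Definition is_Dirac (R : realType) (k : nat) (n : 'I_k -> nat) N (pi : algA R n -> 'M[R[i]]_N)
  (J : 'cV[R[i]]_N -> 'cV[R[i]]_N) (gamma D : 'M[R[i]]_N) : Prop :=
  [/\ adjmx D = D,
      forall v, D *m J v = J (D *m v),
      D *m gamma = - (gamma *m D)
    & (* first-order condition [[D, pi(a)], pi^0(b)] = 0 *)
      forall a b v,
        (D *m pi a - pi a *m D) *m piop pi J b v
        = piop pi J b ((D *m pi a - pi a *m D) *m v)].

Definition in_Omega1 (R : realType) (k : nat) (n : 'I_k -> nat) N (pi : algA R n -> 'M[R[i]]_N) (D : 'M[R[i]]_N)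
  (w : 'M[R[i]]_N) : Prop :=
  exists (m : nat) (c : 'I_m -> R[i]) (a b : 'I_m -> algA R n),
    w = \sum_(j < m) c j *: (pi (a j) *m (D *m pi (b j) - pi (b j) *m D)).

(* The grading is a finite sum of products pi(x) pi0(y).  Every element of
   Omega^1_D commutes with pi0(A), by the order-zero and first-order
   conditions, so an omega that also commutes with pi(A) commutes with gamma.
   On the other hand D anticommutes with gamma while pi(A) commutes with it,
   so every element of Omega^1_D anticommutes with gamma.  Since gamma is an
   involution and 2 is invertible, omega = 0. *)
From mathcomp Require Import all_boot all_algebra.
From mathcomp Require Import reals complex.
Set Implicit Arguments. Unset Strict Implicit. Unset Printing Implicit Defensive.
Import GRing.Theory Num.Theory.
Local Open Scope ring_scope.

Lemma mulmx_cV_inj (F : pzSemiRingType) (m n : nat) (A B : 'M[F]_(m, n)) :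
  (forall v : 'cV_n, A *m v = B *m v) -> A = B.
Proof.
move=> eqAB; apply/matrixP => i j.
have /matrixP/(_ i 0) := eqAB (delta_mx j 0).
by rewrite -!colE !mxE.
Qed.

Lemma commute_anticommute_involution_eq0 (F : numFieldType) (n : nat)
    (g w : 'M[F]_n) :
  g *m g = 1%:M -> w *m g = g *m w -> g *m w = - (w *m g) -> w = 0.
Proof.
move=> gg wg_gw gw_anti.
have wg2 : 2%:R *: (w *m g) = 0.
  by rewrite scaler_nat mulr2n {1}wg_gw gw_anti addNr.
have wg0 : w *m g = 0.
  by rewrite -[w *m g]scale1r -(@mulVf _ 2%:R) ?pnatr_eq0 // -scalerA wg2 scaler0.
by rewrite -[w]mulmx1 -gg mulmxA wg0 mul0mx.
Qed.

Section RealStructure.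

Variables (R : realType) (N : nat) (J : 'cV[R[i]]_N -> 'cV[R[i]]_N).
Hypotheses (JD : forall x y, J (x + y) = J x + J y)
           (JZ : forall (c : R[i]) x, J (c *: x) = c^* *: J x).

Lemma conjJD (T : 'M_N) u v : conjJ J T (u + v) = conjJ J T u + conjJ J T v.
Proof. by rewrite /conjJ JD mulmxDr JD. Qed.

Lemma conjJZ (T : 'M_N) (c : R[i]) v : conjJ J T (c *: v) = c *: conjJ J T v.
Proof. by rewrite /conjJ JZ -scalemxAr JZ conjCK. Qed.

Lemma conjJ0 (T : 'M_N) : conjJ J T 0 = 0.
Proof. by apply: (addrI (conjJ J T 0)); rewrite -conjJD !addr0. Qed.

Lemma conjJ_sum (T : 'M_N) (I : Type) (r : seq I) (f : I -> 'cV_N) :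
  conjJ J T (\sum_(j <- r) f j) = \sum_(j <- r) conjJ J T (f j).
Proof. by apply: (big_morph _ (conjJD T) (conjJ0 T)). Qed.

End RealStructure.

Section OneForms.

Variables (R : realType) (k : nat) (n : 'I_k -> nat) (N : nat).
Variables (pi : algA R n -> 'M[R[i]]_N) (D : 'M[R[i]]_N).

Lemma Omega1_commute_piop (J : 'cV[R[i]]_N -> 'cV[R[i]]_N) (w : 'M_N) :
  is_real_structure J ->
  (forall a b v, piop pi J a (pi b *m v) = pi b *m piop pi J a v) ->
  (forall a b v, (D *m pi a - pi a *m D) *m piop pi J b v
                 = piop pi J b ((D *m pi a - pi a *m D) *m v)) ->
  in_Omega1 pi D w -> forall b v, w *m piop pi J b v = piop pi J b (w *m v).
Proof.
case=> JD JZ _ _ order_zero first_order [m [c [a [b' ->]]]] b v.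
rewrite !mulmx_suml [RHS]conjJ_sum //; apply: eq_bigr => j _.
rewrite -!scalemxAl [RHS]conjJZ // -!mulmxA.
by rewrite [X in pi (a j) *m X]first_order -order_zero.
Qed.

Lemma Omega1_anticommute (g w : 'M_N) :
  (forall a, g *m pi a = pi a *m g) -> g *m D = - (D *m g) ->
  in_Omega1 pi D w -> g *m w = - (w *m g).
Proof.
move=> g_pi gD [m [c [a [b ->]]]].
rewrite mulmx_suml mulmx_sumr -sumrN; apply: eq_bigr => j _.
rewrite -scalemxAr -scalemxAl -scalerN; congr (_ *: _).
have gDpi : g *m (D *m pi (b j)) = - (D *m pi (b j) *m g).
  by rewrite mulmxA gD mulNmx -(mulmxA D g) g_pi mulmxA.
have gpiD : g *m (pi (b j) *m D) = - (pi (b j) *m D *m g).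
  by rewrite mulmxA g_pi -(mulmxA (pi (b j)) g) gD mulmxN mulmxA.
rewrite mulmxA g_pi -!mulmxA -[RHS]mulmxN; congr (_ *m _).
by rewrite mulmxBr gDpi gpiD mulmxBl (opprD (_ *m g)).
Qed.

End OneForms.

Theorem mainTheorem9 (R : realType) (k : nat) (n : 'I_k -> nat)
  (Hn : forall i, (0 < n i)%N) (N : nat)
  (pi : algA R n -> 'M[R[i]]_N) (J : 'cV[R[i]]_N -> 'cV[R[i]]_N)
  (gamma D : 'M[R[i]]_N)
  (HST : is_finite_spectral_triple pi J gamma)
  (HD : is_Dirac pi J gamma D)
  (w : 'M[R[i]]_N) (Hw : in_Omega1 pi D w)
  (Hcomm : forall a : algA R n, pi a *m w = w *m pi a) :
  w = 0.
Proof.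
case: HST => _ HJ _ order_zero [_ gamma2 _ gamma_pi [m [x [y gamma_sum]]]].
case: HD => _ _ D_gamma first_order.
have w_piop := Omega1_commute_piop HJ order_zero first_order Hw.
have w_gamma : w *m gamma = gamma *m w.
  apply: mulmx_cV_inj => v; rewrite -!mulmxA gamma_sum (gamma_sum (w *m v)).
  rewrite mulmx_sumr; apply: eq_bigr => j _.
  by rewrite mulmxA -Hcomm -mulmxA w_piop.
have gamma_D : gamma *m D = - (D *m gamma) by rewrite D_gamma opprK.
apply: (commute_anticommute_involution_eq0 gamma2 w_gamma).
exact: Omega1_anticommute gamma_pi gamma_D Hw.
Qed.
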